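(* Let $H:\mathbb{R}^{2d}\to\mathbb{R}$ be continuous with $H(q,-p)=H(q,p)$, and let $\Psi:\mathbb{R}^{2d}\to\mathbb{R}^{2d}$ be a continuous bijection that preserves Lebesgue measure and is reversible with respect to $S(q,p)=(q,-p)$. Let $\Delta=H\circ\Psi-H$. If $m_\Delta=\int_{\mathbb{R}^{2d}}\Delta(q,p)e^{-H(q,p)}dq\,dp$ exists, then $$0\le m_\Delta\le\int_{\mathbb{R}^{2d}}\Delta(q,p)^2e^{-H(q,p)}dq\,dp,$$ and the first inequality is strict unless $\Delta$ vanishes identically. *)

From HB Require Import structures.
From mathcomp Require Import all_boot all_order all_algebra.
From mathcomp Require Import all_classical all_reals all_analysis.
Set Implicit Arguments. Unset Strict Implicit. Unset Printing Implicit Defensive.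
Import Order.TTheory GRing.Theory Num.Theory.
Local Open Scope classical_set_scope.
Local Open Scope ring_scope.

(* Phase space R^{2d} is represented as pairs (q, p) of d-tuples of reals,
   with the product sigma-algebra of the Borel sigma-algebras of the coordinates. *)
Definition phase (R : realType) (d : nat) := (d.-tuple R * d.-tuple R)%type.

Definition flipS (R : realType) (d : nat) (x : phase R d) : phase R d :=
  (x.1, [tuple of map (fun r : R => - r) x.2]).

Definition phase_close (R : realType) (d : nat) (x y : phase R d) (e : R) :=
  (forall i : 'I_d, `|tnth x.1 i - tnth y.1 i| < e) /\
  (forall i : 'I_d, `|tnth x.2 i - tnth y.2 i| < e).

(* Continuity of a real function on R^{2d} (w.r.t. the usual topology,
   expressed with the equivalent sup-norm). *)
Definition phase_continuous (R : realType) (d : nat) (f : phase R d -> R) :=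
  forall x (e : R), 0 < e -> exists2 del : R, 0 < del &
    forall y, phase_close x y del -> `|f y - f x| < e.

Definition phase_map_continuous (R : realType) (d : nat)
  (F : phase R d -> phase R d) :=
  forall x (e : R), 0 < e -> exists2 del : R, 0 < del &
    forall y, phase_close x y del -> phase_close (F x) (F y) e.

Definition box (R : realType) (d : nat) (a b : d.-tuple R) : set (d.-tuple R) :=
  [set t | forall i : 'I_d, tnth a i <= tnth t i <= tnth b i].

(* mu is Lebesgue measure on R^{2d} = R^d x R^d: it gives every product of
   closed boxes its volume. (Boxes form a generating pi-system of the Borel
   sigma-algebra, so this characterizes Lebesgue measure on Borel sets.) *)
Definition is_lebesgue (R : realType) (d : nat)
  (mu : set (phase R d) -> \bar R) :=
  forall a b c e : d.-tuple R,
    (forall i : 'I_d, tnth a i <= tnth b i) ->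
    (forall i : 'I_d, tnth c i <= tnth e i) ->
    mu (box a b `*` box c e) =
      ((\prod_(i < d) (tnth b i - tnth a i)) *
       (\prod_(i < d) (tnth e i - tnth c i)))%:E.

From HB Require Import structures.
From mathcomp Require Import all_boot all_order all_algebra.
From mathcomp Require Import all_classical all_reals all_analysis.
From mathcomp Require Import measurable_realfun lra ring.
Set Implicit Arguments. Unset Strict Implicit. Unset Printing Implicit Defensive.
Import Order.TTheory GRing.Theory Num.Theory.
Local Open Scope classical_set_scope.
Local Open Scope ring_scope.

(* Put T := S \o Psi.  Reversibility and the S-invariance of H give
   Delta (T x) = - Delta x and H (T x) = H x + Delta x, and T preserves Lebesgue
   measure because Psi and S do.  Pairing x with T x, the integrand
   g := Delta exp(-H) satisfies
     g + g \o T = exp(-H) Delta (1 - exp(-Delta)),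
   which is nonnegative, vanishes only where Delta does, and is bounded by
   exp(-H) Delta^2 (1 + exp(-Delta)) = q + q \o T for q := Delta^2 exp(-H).
   Integrating gives 0 <= 2 m <= 2 \int q.  If m = 0, then Delta = 0 almost
   everywhere, hence everywhere: Delta is continuous and nondegenerate cubes
   have positive Lebesgue measure. *)

Lemma lee_double (R : realDomainType) (a b : \bar R) :
  (a + a <= b + b)%E -> (a <= b)%E.
Proof.
case: a b => [a| |] [b| |] //=; rewrite ?leey ?leNye // -?EFinD !lee_fin; lra.
Qed.

Section measure_preserving.
Local Open Scope ereal_scope.
Context dX (X : measurableType dX) (R : realType).
Variable mu : {measure set X -> \bar R}.
Variables (T : X -> X) (mT : measurable_fun setT T).
Hypothesis T_pres : forall A, measurable A -> mu (T @^-1` A) = mu A.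

Let integral_pushforwardE (f : X -> \bar R) :
  \int[mu]_x f x = \int[pushforward mu T]_x f x.
Proof.
by apply: eq_measure_integral => A mA _; rewrite /= /pushforward T_pres.
Qed.

Lemma ge0_integral_preserving (f : X -> \bar R) : measurable_fun setT f ->
  (forall x, 0 <= f x) -> \int[mu]_x f (T x) = \int[mu]_x f x.
Proof.
move=> mf f0.
by rewrite [RHS]integral_pushforwardE ge0_integral_pushforward // preimage_setT.
Qed.

Lemma integrable_preserving (f : X -> \bar R) : mu.-integrable setT f ->
  mu.-integrable setT (f \o T).
Proof.
move=> /integrableP[mf fi]; apply/integrableP.
split; first exact: measurableT_comp.
rewrite (ge0_integral_preserving (f := fun x => `|f x|)) //.
exact: measurableT_comp.
Qed.

Lemma integral_preserving (f : X -> \bar R) : mu.-integrable setT f ->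
  \int[mu]_x f (T x) = \int[mu]_x f x.
Proof.
move=> intf; have intfT := integrable_preserving intf.
rewrite [RHS]integral_pushforwardE integral_pushforward ?preimage_setT //.
by case/integrableP: intf.
Qed.

End measure_preserving.

Section expR_bounds.
Variable R : realType.
Implicit Type t : R.

Lemma mul_onem_expRN_gt0 t : t != 0 -> 0 < t * (1 - expR (- t)).
Proof.
case: (ltgtP t 0) => // [t0|t0] _.
- by rewrite nmulr_rgt0 // subr_lt0 expR_gt1 oppr_gt0.
- by rewrite mulr_gt0 // subr_gt0 expR_lt1 oppr_lt0.
Qed.

Lemma mul_onem_expRN_ge0 t : 0 <= t * (1 - expR (- t)).
Proof.
by have [->|/mul_onem_expRN_gt0/ltW] := eqVneq t 0; rewrite ?mul0r.
Qed.

Lemma mul_onem_expRN_le t : t * (1 - expR (- t)) <= t ^+ 2 * (1 + expR (- t)).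
Proof.
set v := expR (- t).
have v0 : 0 < v by exact: expR_gt0.
have h1 : 1 - t <= v by exact: expR_ge1Dx.
have h2 : (1 + t) * v <= 1.
  rewrite -[leRHS](_ : expR t * v = 1) ?ler_wpM2r ?expR_ge1Dx ?ltW //.
  by rewrite /v -expRD subrr expR0.
have [t0|t0] := leP 0 t; nra.
Qed.

End expR_bounds.

Section reversible_energy_error.
Context dX (X : measurableType dX) (R : realType).
Variable mu : {measure set X -> \bar R}.
Variables (T : X -> X) (h D : X -> R).
Hypotheses (mT : measurable_fun setT T)
  (T_pres : forall A, measurable A -> mu (T @^-1` A) = mu A).
Hypotheses (mh : measurable_fun setT h) (mD : measurable_fun setT D).
Hypotheses (DT : forall x, D (T x) = - D x)
  (hT : forall x, h (T x) = h x + D x).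
Hypothesis intg : mu.-integrable setT (fun x => (D x * expR (- h x))%:E).

Let g x := D x * expR (- h x).
Let q x := D x ^+ 2 * expR (- h x).

Let mg : measurable_fun setT g.
Proof.
apply: measurable_funM => //; apply: measurableT_comp => //.
exact: measurable_funN.
Qed.

Let mq : measurable_fun setT q.
Proof.
apply: measurable_funM; first exact: measurable_funX.
by apply: measurableT_comp => //; exact: measurable_funN.
Qed.

Let q_ge0 x : 0 <= q x.
Proof. by rewrite mulr_ge0 ?sqr_ge0 ?expR_ge0. Qed.

Let gT x : g x + g (T x) = expR (- h x) * (D x * (1 - expR (- D x))).
Proof. by rewrite /g DT hT opprD expRD; ring. Qed.

Let qT x : q x + q (T x) = expR (- h x) * (D x ^+ 2 * (1 + expR (- D x))).
Proof. by rewrite /q DT hT opprD expRD; ring. Qed.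

Let sym_g_ge0 x : 0 <= g x + g (T x).
Proof. by rewrite gT mulr_ge0 ?expR_ge0 ?mul_onem_expRN_ge0. Qed.

Let msym_g : measurable_fun setT (fun x => (g x + g (T x))%:E).
Proof.
by apply/measurable_EFinP/measurable_funD => //; exact: measurableT_comp.
Qed.

Let msym_q : measurable_fun setT (fun x => (q x + q (T x))%:E).
Proof.
by apply/measurable_EFinP/measurable_funD => //; exact: measurableT_comp.
Qed.

Let integral_gT : (\int[mu]_x (g x)%:E + \int[mu]_x (g x)%:E =
  \int[mu]_x (g x + g (T x))%:E)%E.
Proof.
rewrite -[X in (_ + X)%E](integral_preserving mT T_pres intg) -integralD //.
exact: (integrable_preserving mT T_pres intg).
Qed.

Let integral_qT : (\int[mu]_x (q x)%:E + \int[mu]_x (q x)%:E =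
  \int[mu]_x (q x + q (T x))%:E)%E.
Proof.
have mqE : measurable_fun setT (fun x => (q x)%:E) by exact/measurable_EFinP.
rewrite -[X in (_ + X)%E](ge0_integral_preserving mT T_pres mqE); last first.
  by move=> x; rewrite lee_fin.
rewrite -ge0_integralD // => [x _|x _|]; rewrite ?lee_fin //.
by apply/measurable_EFinP; exact: measurableT_comp.
Qed.

Lemma reversible_energy_error_ge0 :
  (0 <= \int[mu]_x (D x * expR (- h x))%:E)%E.
Proof.
apply: lee_double; rewrite adde0 integral_gT.
by apply: integral_ge0 => x _; rewrite lee_fin.
Qed.

Lemma reversible_energy_error_le : (\int[mu]_x (D x * expR (- h x))%:E <=
  \int[mu]_x (D x ^+ 2 * expR (- h x))%:E)%E.
Proof.
apply: lee_double; rewrite integral_gT integral_qT.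
apply: ge0_le_integral => // [x _|x _]; rewrite lee_fin //.
by rewrite gT qT ler_wpM2l ?expR_ge0 ?mul_onem_expRN_le.
Qed.

Lemma reversible_energy_error_eq0 :
  (\int[mu]_x (D x * expR (- h x))%:E = 0)%E -> {ae mu, forall x, D x = 0}.
Proof.
move=> g0.
have /(ae_eq_integral_abs mu measurableT msym_g) :
    (\int[mu]_x `|(g x + g (T x))%:E| = 0)%E.
  rewrite (eq_integral (fun x => (g x + g (T x))%:E)) => [|x _]; last first.
    by rewrite gee0_abs // lee_fin.
  by rewrite -integral_gT g0 adde0.
apply: filterS => x /(_ I) /= /eqP.
rewrite eqe gT mulf_eq0 gt_eqF ?expR_gt0 //=.
by apply: contraTeq => /mul_onem_expRN_gt0; rewrite lt0r => /andP[].
Qed.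

End reversible_energy_error.

Section phase_space.
Context (R : realType) (d : nat).
Local Notation E := (phase R d).

Definition phase_open (U : set E) := forall x, U x ->
  exists2 r : R, 0 < r & forall y, phase_close x y r -> U y.

Definition phase_boxes : set (set E) :=
  [set A | exists a b c e, A = box a b `*` box c e].

Lemma box_measurable (a b : d.-tuple R) : measurable (box a b).
Proof.
have -> : box a b = \bigcap_(i in [set: 'I_d])
   ((@tnth d R)^~ i @^-1` [set` `[tnth a i, tnth b i]]).
  apply/seteqP; split => x /=.
  - by move=> h i _; rewrite /= in_itv /=; exact: h.
  - by move=> h i; have := h i I; rewrite /= in_itv.
apply: fin_bigcap_measurable; first exact: finite_finset.
move=> i _; rewrite -[X in measurable X]setTI.
exact: (measurable_tnth i measurableT (measurable_itv _)).
Qed.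

Lemma phase_boxes_measurable : phase_boxes `<=` measurable.
Proof.
by move=> _ [a [b [c [e ->]]]]; apply: measurableX; exact: box_measurable.
Qed.

Definition tshift (t : d.-tuple R) (r : R) := [tuple tnth t j + r | j < d].

Definition cube (c : E) (r : R) : set E := [set y : E | forall j,
  `|tnth y.1 j - tnth c.1 j| <= r /\ `|tnth y.2 j - tnth c.2 j| <= r].

Lemma cubeE c r : cube c r = box (tshift c.1 (- r)) (tshift c.1 r) `*`
                              box (tshift c.2 (- r)) (tshift c.2 r).
Proof.
apply/seteqP; split => y /=.
- by move=> h; split => j; rewrite !tnth_mktuple -ler_distl; case: (h j).
- by move=> [h1 h2] j; move: (h1 j) (h2 j); rewrite !tnth_mktuple -!ler_distl.
Qed.

Lemma cube_boxes c r : phase_boxes (cube c r).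
Proof. by rewrite cubeE; do 4 eexists. Qed.

Definition tratr (t : d.-tuple rat) : d.-tuple R :=
  [tuple ratr (tnth t j) | j < d].

Definition rat_cube (i : (d.-tuple rat * d.-tuple rat) * rat) : set E :=
  cube (tratr i.1.1, tratr i.1.2) (ratr i.2).

Lemma tratr_near (s : d.-tuple R) (r : R) : 0 < r ->
  exists q : d.-tuple rat, forall j, `|tnth (tratr q) j - tnth s j| < r.
Proof.
move=> r0.
have near j : exists q : rat, ratr q \in `](tnth s j - r), (tnth s j + r)[.
  by apply: rat_in_itvoo; lra.
have [f hf] := choice near.
exists [tuple f j | j < d] => j.
by rewrite !tnth_mktuple ltr_distl; move: (hf j); rewrite in_itv.
Qed.

Lemma phase_open_rat_cube U x : phase_open U -> U x ->
  exists i, rat_cube i x /\ rat_cube i `<=` U.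
Proof.
move=> oU Ux; have [del del0 hdel] := oU x Ux.
have [r] := @rat_in_itvoo R 0 (del / 2) ltac:(by rewrite divr_gt0).
rewrite in_itv /= => /andP[r0 r2].
have [q1 hq1] := tratr_near x.1 r0.
have [q2 hq2] := tratr_near x.2 r0.
exists ((q1, q2), r); split => [j|y hy].
  by rewrite !(distrC (tnth x.1 j)) !(distrC (tnth x.2 j)) !ltW.
apply: hdel; split => j; have [h1 h2] := hy j.
- apply: le_lt_trans (ler_distD (tnth (tratr q1) j) _ _) _.
  by rewrite distrC [X in _ + X]distrC; have := hq1 j; lra.
- apply: le_lt_trans (ler_distD (tnth (tratr q2) j) _ _) _.
  by rewrite distrC [X in _ + X]distrC; have := hq2 j; lra.
Qed.

Lemma phase_open_boxes U : phase_open U -> <<s phase_boxes >> U.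
Proof.
(* [U] is the union of the rational cubes it contains, a countable family. *)
move=> oU.
pose F n : set E := if pickle_inv n is Some i then
  (if pselect (rat_cube i `<=` U) then rat_cube i else set0) else set0.
have -> : U = \bigcup_n F n.
  apply/seteqP; split => [x Ux|x [n _]].
  - have [i [xi iU]] := phase_open_rat_cube oU Ux.
    by exists (pickle i) => //; rewrite /F pickleK_inv; case: pselect.
  - by rewrite /F; case: pickle_inv => // i; case: pselect => // h /h.
apply: sigma_algebra_bigcup => n; rewrite /F.
case: pickle_inv => [i|]; last exact: sigma_algebra0.
case: pselect => ?; last exact: sigma_algebra0.
by apply: sub_sigma_algebra; exact: cube_boxes.
Qed.

Lemma phase_continuous_open_preimage (g : E -> R) a b : phase_continuous g ->
  phase_open [set x | g x \in `]a, b[].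
Proof.
move=> cg x; rewrite /= in_itv /= => /andP[ax xb].
have [del del0 hd] := cg x (Num.min (g x - a) (b - g x))
  ltac:(by rewrite lt_min !subr_gt0 ax xb).
exists del => // y /hd.
rewrite lt_min !ltr_norml => /andP[/andP[? ?] /andP[? ?]].
by rewrite /= in_itv /=; apply/andP; split; lra.
Qed.

Lemma phase_continuous_preimage_boxes (g : E -> R) : phase_continuous g ->
  forall Y, measurable Y -> <<s phase_boxes >> (g @^-1` Y).
Proof.
move=> cg Y mY.
suff : image_set_system setT g <<s phase_boxes >> Y.
  by rewrite /image_set_system /= setTI.
move: Y mY; have -> : (measurable : set (set R)) = <<s @RGenOpens.G R >>.
  exact: RGenOpens.measurableE.
apply: smallest_sub.
  by apply: sigma_algebra_image; exact: smallest_sigma_algebra.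
move=> _ [a [b ->]]; rewrite /image_set_system /= setTI.
apply: phase_open_boxes; exact: phase_continuous_open_preimage.
Qed.

Lemma tuple_preimage_boxes (p : E -> d.-tuple R) :
  (forall i, phase_continuous (fun x => tnth (p x) i)) ->
  forall B, measurable B -> <<s phase_boxes >> (p @^-1` B).
Proof.
move=> cp B mB.
suff : image_set_system setT p <<s phase_boxes >> B.
  by rewrite /image_set_system /= setTI.
move: B mB.
suff h : <<s \big[setU/set0]_(i < d) preimage_set_system setT
    (fun x : d.-tuple R => tnth x i) measurable >> `<=`
    image_set_system setT p <<s phase_boxes >> by exact: h.
apply: smallest_sub.
  by apply: sigma_algebra_image; exact: smallest_sigma_algebra.
apply: (big_ind (fun S => S `<=` _)) => //.
  by move=> S1 S2 h1 h2; rewrite subUset; split.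
move=> i _ _ [Y mY <-]; rewrite /image_set_system /= !setTI.
exact: phase_continuous_preimage_boxes (cp i) _ mY.
Qed.

Lemma measurable_phase_boxes : (measurable : set (set E)) = <<s phase_boxes >>.
Proof.
rewrite eqEsubset; split; last first.
  apply: smallest_sub; first exact: sigma_algebra_measurable.
  exact: phase_boxes_measurable.
apply: smallest_sub; first exact: smallest_sigma_algebra.
rewrite subUset; split => _ [B mB <-]; rewrite setTI;
  apply: tuple_preimage_boxes mB => i x e e0; exists e => // y [h1 h2].
- by rewrite distrC; exact: h1.
- by rewrite distrC; exact: h2.
Qed.

Lemma phase_continuous_measurable (g : E -> R) : phase_continuous g ->
  measurable_fun setT g.
Proof.
move=> cg _ Y mY; rewrite setTI measurable_phase_boxes.
exact: phase_continuous_preimage_boxes.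
Qed.

Lemma phase_map_continuous_measurable (F : E -> E) : phase_map_continuous F ->
  measurable_fun setT F.
Proof.
move=> cF; apply/measurable_fun_pairP; split; apply/measurable_fun_tnthP => j;
  apply: phase_continuous_measurable => x e e0; have [del d0 h] := cF x e e0;
  exists del => // y /h [h1 h2]; rewrite /= distrC; [exact: h1|exact: h2].
Qed.

Lemma phase_continuous_comp (f : E -> R) (F : E -> E) :
  phase_map_continuous F -> phase_continuous f -> phase_continuous (f \o F).
Proof.
move=> cF cf x e e0; have [del1 del10 h1] := cf (F x) e e0.
have [del2 del20 h2] := cF x del1 del10.
by exists del2 => // y /h2 /h1.
Qed.

Lemma phase_continuousB (f g : E -> R) : phase_continuous f ->
  phase_continuous g -> phase_continuous (fun x => f x - g x).
Proof.
move=> cf cg x e e0.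
have [del1 del10 h1] := cf x (e / 2) ltac:(by rewrite divr_gt0).
have [del2 del20 h2] := cg x (e / 2) ltac:(by rewrite divr_gt0).
exists (Num.min del1 del2) => [|y [hq hp]]; first by rewrite lt_min del10.
have close del : Num.min del1 del2 <= del -> phase_close x y del.
  by move=> hdel; split => j; apply: lt_le_trans hdel; [exact: hq|exact: hp].
have /h1 := close del1 ltac:(by rewrite ge_min lexx).
have /h2 := close del2 ltac:(by rewrite ge_min lexx orbT).
have -> : f y - g y - (f x - g x) = (f y - f x) - (g y - g x) by ring.
by move=> hg hf; apply: le_lt_trans (ler_normB _ _) _; lra.
Qed.

Lemma phase_continuous_neq0_cube (f : E -> R) x : phase_continuous f ->
  f x != 0 -> exists2 r : R, 0 < r & cube x r `<=` [set y | f y != 0].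
Proof.
move=> cf fx0; have [del del0 hdel] := cf x `|f x| ltac:(by rewrite normr_gt0).
exists (del / 2) => [|y hy]; first by rewrite divr_gt0.
have /hdel : phase_close x y del.
  split => j; have [h1 h2] := hy j; rewrite distrC.
  - by apply: le_lt_trans h1 _; lra.
  - by apply: le_lt_trans h2 _; lra.
by apply: contraTneq => /= ->; rewrite sub0r normrN ltxx.
Qed.

Lemma flipS_continuous : phase_map_continuous (@flipS R d).
Proof.
move=> x e e0; exists e => // y [h1 h2]; split => j /=; first exact: h1.
by rewrite !tnth_map -opprD normrN; exact: h2.
Qed.

Definition tneg (t : d.-tuple R) := [tuple - tnth t j | j < d].

Lemma flipS_preimage_box a b c e : @flipS R d @^-1` (box a b `*` box c e) =
  box a b `*` box (tneg e) (tneg c).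
Proof.
apply/seteqP; split => y /= [h1 h2]; split => // j; have := h2 j;
  rewrite /= !tnth_mktuple ?tnth_map => /andP[u v]; apply/andP; split; lra.
Qed.

Lemma box_degenerate (a b : d.-tuple R) :
  ~ (forall j, tnth a j <= tnth b j) -> box a b = set0.
Proof.
move=> ab; apply/seteqP; split => y //= yab; apply: ab => j.
by have /andP[? ?] := yab j; lra.
Qed.

Definition tmax (a a' : d.-tuple R) :=
  [tuple Num.max (tnth a j) (tnth a' j) | j < d].
Definition tmin (a a' : d.-tuple R) :=
  [tuple Num.min (tnth a j) (tnth a' j) | j < d].

Lemma boxI a b a' b' : box a b `&` box a' b' = box (tmax a a') (tmin b b').
Proof.
apply/seteqP; split => y /=.
- move=> [h h'] j; have /andP[u v] := h j; have /andP[u' v'] := h' j.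
  by rewrite !tnth_mktuple ge_max le_min u v u' v'.
- move=> h; split => j; have := h j;
  rewrite !tnth_mktuple ge_max le_min => /andP[/andP[u u'] /andP[v v']];
  by rewrite ?u ?u' ?v ?v'.
Qed.

Lemma phase_boxes_setI_closed : setI_closed phase_boxes.
Proof.
move=> _ _ [a [b [c [e ->]]]] [a' [b' [c' [e' ->]]]].
by rewrite -setXI !boxI; do 4 eexists.
Qed.

Definition phase0 : E := ([tuple 0 | j < d], [tuple 0 | j < d]).

Lemma bigcup_cube : \bigcup_k cube phase0 k%:R = setT.
Proof.
apply/seteqP; split => // y _.
pose M := \sum_(j < d) (`|tnth y.1 j| + `|tnth y.2 j|).
have leM j : `|tnth y.1 j| + `|tnth y.2 j| <= M.
  rewrite /M (bigD1 j) //= lerDl.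
  by apply: sumr_ge0 => i _; apply: addr_ge0.
exists (Num.truncn M).+1 => // j; rewrite /phase0 /= !tnth_mktuple !subr0.
have := truncnS_gt M; have := leM j.
have := normr_ge0 (tnth y.1 j); have := normr_ge0 (tnth y.2 j).
by move=> *; split; lra.
Qed.

Section lebesgue.
Variable mu : {measure set E -> \bar R}.
Hypothesis Hmu : is_lebesgue mu.

Lemma lebesgue_cube c r : 0 <= r ->
  mu (cube c r) = ((r + r) ^+ d * (r + r) ^+ d)%:E.
Proof.
move=> r0; rewrite cubeE Hmu; last 2 first.
- by move=> j; rewrite !tnth_mktuple; lra.
- by move=> j; rewrite !tnth_mktuple; lra.
have side (t : d.-tuple R) :
    \prod_(i < d) (tnth (tshift t r) i - tnth (tshift t (- r)) i) = (r + r) ^+ d.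
  rewrite -[in RHS](card_ord d) -prodr_const; apply: eq_bigr => j _.
  by rewrite !tnth_mktuple opprD opprK addrACA subrr add0r.
by rewrite !side.
Qed.

Lemma lebesgue_cube_gt0 c r : 0 < r -> (0 < mu (cube c r))%E.
Proof.
move=> r0; rewrite lebesgue_cube ?ltW // lte_fin.
by rewrite mulr_gt0 // exprn_gt0 // addr_gt0.
Qed.

Lemma phase_continuous_ae_eq0 (f : E -> R) : phase_continuous f ->
  {ae mu, forall x, f x = 0} -> forall x, f x = 0.
Proof.
move=> cf [N [mN N0 fN]] x; apply/eqP/negP => /negP fx0.
have [r r0 rf] := phase_continuous_neq0_cube cf fx0.
have cubeN : cube x r `<=` N by move=> y /rf /eqP fy0; apply: fN.
have : (mu (cube x r) <= 0)%E.
  rewrite -N0; apply: le_measure cubeN; rewrite inE //.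
  exact: (phase_boxes_measurable (cube_boxes x r)).
by rewrite leNgt lebesgue_cube_gt0.
Qed.

Lemma flipS_preserving A : measurable A -> mu (@flipS R d @^-1` A) = mu A.
Proof.
(* [mflip] equips [pushforward mu flipS] with its measure structure. *)
have mflip := phase_map_continuous_measurable flipS_continuous.
move=> mA; apply/esym.
apply: (measure_unique phase_boxes (fun k => cube phase0 k%:R)
  measurable_phase_boxes phase_boxes_setI_closed _ bigcup_cube mu
  (pushforward mu (@flipS R d))) => //.
- by move=> k; exact: cube_boxes.
- move=> _ [a [b [c [e ->]]]]; rewrite /= /pushforward flipS_preimage_box.
  have [ab|/box_degenerate ->] := pselect (forall j, tnth a j <= tnth b j);
    last by rewrite !set0X.
  have [ce|ce] := pselect (forall j, tnth c j <= tnth e j); last first.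
    have ec : ~ (forall j, tnth (tneg e) j <= tnth (tneg c) j).
      by move=> ec; apply: ce => j; have := ec j; rewrite !tnth_mktuple lerN2.
    by rewrite (box_degenerate ce) (box_degenerate ec) !setX0.
  rewrite !Hmu //; last by move=> j; rewrite !tnth_mktuple lerN2.
  congr (_ * _)%:E; apply: eq_bigr => j _.
  by rewrite !tnth_mktuple opprK addrC.
- by move=> k; rewrite lebesgue_cube ?ltry.
Qed.

End lebesgue.

End phase_space.

Theorem theorem6p1 (R : realType) (d : nat)
  (mu : {measure set (phase R d) -> \bar R}) (Hmu : is_lebesgue mu)
  (H : phase R d -> R) (Psi : phase R d -> phase R d) :
  phase_continuous H ->
  (forall x, H (flipS x) = H x) ->
  phase_map_continuous Psi ->
  bijective Psi ->
  (forall A, measurable A -> mu (Psi @^-1` A) = mu A) ->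
  (forall x, Psi (flipS (Psi x)) = flipS x) ->
  let Delta := fun x => H (Psi x) - H x in
  mu.-integrable setT (fun x => (Delta x * expR (- H x))%:E) ->
  let m := (\int[mu]_x (Delta x * expR (- H x))%:E)%E in
  [/\ (0 <= m)%E,
      (m <= \int[mu]_x ((Delta x) ^+ 2 * expR (- H x))%:E)%E
    & (exists x, Delta x != 0) -> (0 < m)%E].
Proof.
move=> cH H_flip cPsi _ Psi_pres Psi_rev Delta intg m.
pose T := @flipS R d \o Psi.
have mflip := phase_map_continuous_measurable (@flipS_continuous R d).
have mT : measurable_fun setT T.
  exact: measurableT_comp mflip (phase_map_continuous_measurable cPsi).
have T_pres A : measurable A -> mu (T @^-1` A) = mu A.
  move=> mA; rewrite comp_preimage Psi_pres ?flipS_preserving //.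
  by rewrite -[_ @^-1` A]setTI; exact: mflip.
have DeltaT x : Delta (T x) = - Delta x.
  by rewrite /Delta /T /= Psi_rev !H_flip opprB.
have HT x : H (T x) = H x + Delta x by rewrite /T /= H_flip /Delta addrC subrK.
have cDelta : phase_continuous Delta.
  exact: phase_continuousB (phase_continuous_comp cPsi cH) cH.
have mH := phase_continuous_measurable cH.
have mDelta := phase_continuous_measurable cDelta.
have m_ge0 : (0 <= m)%E by apply: (reversible_energy_error_ge0 (T := T)).
split => //; first by apply: (reversible_energy_error_le (T := T)).
move=> [x0 /eqP Dx0]; rewrite lt_neqAle m_ge0 andbT eq_sym; apply/eqP => m0.
apply/Dx0/(phase_continuous_ae_eq0 Hmu cDelta).
by apply: (reversible_energy_error_eq0 (T := T) (h := H)).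
Qed.
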